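(* Let $\Omega$, $\mathcal K$ be as in the context, let $\mathcal B$ be a basis of the chain complex of $\mathcal K$, let $k\in\{0,1,2\}$, and let $\mathcal M_k=\{(\sigma_1,\tau_1),\dots,(\sigma_n,\tau_n)\}$ be an acyclic matching of $k$-chains on $\mathcal B$, ordered so that $\sigma_i$ is not incident to any of $\tau_{i+1},\dots,\tau_n$. Let $\mathcal B'=\mathcal B\cdot\mathcal M_k$ and let $\mathcal D_k=\{\sigma_1,\dots,\sigma_n\}$, $\mathcal U_{k+1}=\{\tau_1,\dots,\tau_n\}$, $\mathcal C_k=\mathcal B'_k\setminus\mathcal D_k$, $\mathcal C_{k+1}=\mathcal B'_{k+1}\setminus\mathcal U_{k+1}$. Then the matrix $\mathbf D_k$ with respect to the basis $\mathcal B'$ has the block form $$\mathbf D_k=\begin{pmatrix}\mathbf D_k[\mathcal U_{k+1}\times\mathcal D_k] & \mathbf D_k[\mathcal U_{k+1}\times\mathcal C_k]\\ 0 & \mathbf D_k[\mathcal C_{k+1}\times\mathcal C_k]\end{pmatrix},$$ where $\mathbf D_k[\mathcal U_{k+1}\times\mathcal D_k]$ is upper triangular and invertible.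
   Context: $\Omega\subset\mathbb R^3$ is a closed bounded polyhedral domain with Lipschitz boundary, homeomorphic to a closed 3-ball; $\mathcal K$ is a polyhedral cell complex (regular cell complex with polyhedral cells) subdividing $\Omega$ with oriented cells. $C_k$ is the real vector space of $k$-chains with canonical basis the $k$-cells; $\partial_{k+1}:C_{k+1}\to C_k$ is the boundary operator (on a cell $\tau$, $\partial\tau=\sum_\rho w_\rho\rho$ with $w_\rho=\pm1$ according to induced orientation if $\rho\subset\partial\tau$, else $0$); $\langle\cdot,\cdot\rangle$ is the scalar product making the canonical basis orthonormal. A basis $\mathcal B=\bigcup_k\mathcal B_k$ consists of bases of each $C_k$. For $\sigma\in\mathcal B_k$, $\tau\in\mathcal B_{k+1}$, $\sigma\prec\tau$ (incident) iff $\langle\sigma,\partial_{k+1}\tau\rangle\ne0$. With respect to a basis $\mathcal B$, $\mathbf D_k$ is the matrix with rows indexed by $\mathcal B_{k+1}$, columns by $\mathcal B_k$, entry $(\tau,\sigma)=\langle\sigma,\partial_{k+1}\tau\rangle$; for a partition of indices, $\mathbf A[I\times J]$ denotes the submatrix with rows in $I$, columns in $J$. A matching of $k$-chains on $\mathcal B$ is a set of pairs $(\sigma,\tau)$, $\sigma\in\mathcal B_k$, $\tau\in\mathcal B_{k+1}$, $\sigma\prec\tau$, each basis element in at most one pair; it is acyclic if there is no cycle $\tau_1\succ\sigma_1\prec\tau_2\succ\cdots\prec\tau_h\succ\sigma_h\prec\tau_1$ with $h\ge2$, $(\sigma_i,\tau_i)$ in the matching, $\tau_i$ distinct (such a matching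 admits an ordering as in the claim). Change of basis $\mathcal B\cdot\mathcal M_k$: set $\mathcal B^{(0)}=\mathcal B$; for $i=1,\dots,n$, $\mathcal B^{(i)}$ is obtained from $\mathcal B^{(i-1)}$ by leaving all elements unchanged except each element $\tau'\in\mathcal B^{(i-1)}_{k+1}$ not among $\tau_1,\dots,\tau_n$, which is replaced by $\tau'-\frac{\langle\sigma_i,\partial_{k+1}\tau'\rangle}{\langle\sigma_i,\partial_{k+1}\tau_i\rangle}\tau_i$; then $\mathcal B\cdot\mathcal M_k:=\mathcal B^{(n)}$ (again a basis, containing all $\sigma_i,\tau_i$). *)

From HB Require Import structures.
From mathcomp Require Import all_boot all_order all_algebra.
From mathcomp Require Import reals.
Set Implicit Arguments. Unset Strict Implicit. Unset Printing Implicit Defensive.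
Import Order.TTheory GRing.Theory Num.Theory.
Local Open Scope ring_scope.

(* Chains are row vectors over the canonical basis of cells:
   C_k = 'rV[R]_(ncell k).  The boundary operator d_{k+1} : C_{k+1} -> C_k
   acts by right multiplication  c |-> c *m bd k,
   where bd k : 'M_(ncell k.+1, ncell k) has entry (tau, rho) = w_rho. *)
Record cell_complex3 (R : realType) := CellComplex3 {
  ncell : nat -> nat;
  bd : forall k : nat, 'M[R]_(ncell k.+1, ncell k);
  ncell_gt3 : forall k, (3 < k)%N -> ncell k = 0%N;
  bd_entries : forall k i j, bd k i j \in [:: -1; 0; 1];
  bd_bd : forall k, bd k.+1 *m bd k = 0
}.

Definition dotc (R : realType) (n : nat) (u v : 'rV[R]_n) : R :=
  \sum_(i < n) u 0 i * v 0 i.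

Section Defs.
Variable R : realType.
Variable K : cell_complex3 R.

Definition bnd (k : nat) (c : 'rV[R]_(ncell K k.+1)) : 'rV[R]_(ncell K k) :=
  c *m bd K k.

(* A basis of C_k is given as a square invertible matrix whose rows are the
   basis elements; a basis of the chain complex is such a matrix for each k. *)
Definition is_chain_basis (B : forall k, 'M[R]_(ncell K k)) : Prop :=
  forall k, B k \in unitmx.

Definition incident (k : nat) (sigma : 'rV[R]_(ncell K k))
  (tau : 'rV[R]_(ncell K k.+1)) : bool :=
  dotc sigma (bnd tau) != 0.

(* A matching of k-chains on B with m pairs (sigma_i, tau_i) =
   (row (s i) (B k), row (t i) (B k.+1)), i < m. *)
Definition is_matching (B : forall k, 'M[R]_(ncell K k)) (k m : nat)
  (s : 'I_m -> 'I_(ncell K k)) (t : 'I_m -> 'I_(ncell K k.+1)) : Prop :=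
  injective s /\ injective t /\
  forall i, incident (row (s i) (B k)) (row (t i) (B k.+1)).

(* acyclic: no cycle tau_{p1} > sigma_{p1} < tau_{p2} > ... < tau_{p1}
   with h >= 2 distinct matched pairs *)
Definition is_acyclic (B : forall k, 'M[R]_(ncell K k)) (k m : nat)
  (s : 'I_m -> 'I_(ncell K k)) (t : 'I_m -> 'I_(ncell K k.+1)) : Prop :=
  ~ exists c : seq 'I_m,
      [/\ uniq c, (2 <= size c)%N &
          cycle (fun a b => incident (row (s a) (B k)) (row (t b) (B k.+1))) c].

Definition cob_step (k m : nat) (Bk : 'M[R]_(ncell K k))
  (s : 'I_m -> 'I_(ncell K k)) (t : 'I_m -> 'I_(ncell K k.+1))
  (M : 'M[R]_(ncell K k.+1)) (i : 'I_m) : 'M[R]_(ncell K k.+1) :=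
  let sig := row (s i) Bk in
  let tau := row (t i) M in
  \matrix_(r, c)
    if r \in [seq t j | j : 'I_m] then M r c
    else M r c - dotc sig (bnd (row r M)) / dotc sig (bnd tau) * tau 0 c.

(* B . M_k changes only the (k+1)-basis (the k-basis, and all others, are
   unchanged): this is its (k+1)-component, steps i = 1..m in order. *)
Definition change_basis_succ (B : forall k, 'M[R]_(ncell K k)) (k m : nat)
  (s : 'I_m -> 'I_(ncell K k)) (t : 'I_m -> 'I_(ncell K k.+1))
  : 'M[R]_(ncell K k.+1) :=
  foldl (cob_step (B k) s t) (B k.+1) (enum 'I_m).

Definition Dmat (k : nat) (Bk : 'M[R]_(ncell K k)) (Bk1 : 'M[R]_(ncell K k.+1))
  : 'M[R]_(ncell K k.+1, ncell K k) :=
  \matrix_(r, c) dotc (row c Bk) (bnd (row r Bk1)).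

End Defs.

(** Each step of the change of basis subtracts from every unmatched row the
    multiple of [tau_i] that makes it orthogonal, under the boundary, to
    [sigma_i], and never touches the rows [tau_j].  Since [sigma_i] is not
    incident to the later pivots [tau_x] (x > i), the later steps preserve this
    orthogonality, so at the end the unmatched rows vanish on every [sigma_i].
    The block on the matched rows and columns is never changed: it is the
    incidence matrix of the matching, upper triangular by the ordering
    hypothesis and with nonzero diagonal since matched pairs are incident. *)

From HB Require Import structures.
From mathcomp Require Import all_boot all_order all_algebra.
From mathcomp Require Import reals.
Import Order.TTheory GRing.Theory Num.Theory.
Local Open Scope ring_scope.

Lemma unitmx_upper_trig (F : fieldType) (n : nat) (A : 'M[F]_n) :
  (forall i j : 'I_n, (j < i)%N -> A i j = 0) ->
  (forall i, A i i != 0) -> A \in unitmx.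
Proof.
move=> A_trig A_diag; rewrite unitmxE unitfE -det_tr det_trig.
  by apply/prodf_neq0 => i _; rewrite mxE.
by apply/is_trig_mxP => i j lt_ij; rewrite mxE A_trig.
Qed.

Lemma dotcBZr (R : realType) (n : nat) (u v w : 'rV[R]_n) (a : R) :
  dotc u (v - a *: w) = dotc u v - a * dotc u w.
Proof.
rewrite /dotc mulr_sumr -sumrB; apply: eq_bigr => i _.
by rewrite !mxE mulrDr mulrN mulrCA.
Qed.

Lemma bndBZ (R : realType) (K : cell_complex3 R) (k : nat)
  (v w : 'rV[R]_(ncell K k.+1)) (a : R) :
  bnd (v - a *: w) = bnd v - a *: bnd w.
Proof. by rewrite /bnd mulmxBl scalemxAl. Qed.

Section ChangeOfBasis.

Variables (R : realType) (K : cell_complex3 R) (k m : nat).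
Variable Bk : 'M[R]_(ncell K k).
Variables (s : 'I_m -> 'I_(ncell K k)) (t : 'I_m -> 'I_(ncell K k.+1)).

Local Notation step := (cob_step Bk s t).
Local Notation sigma i := (row (s i) Bk).
Local Notation matched := [seq t j | j : 'I_m].

Lemma row_cob_step_matched (M : 'M[R]_(ncell K k.+1)) (i j : 'I_m) :
  row (t j) (step M i) = row (t j) M.
Proof. by apply/rowP => c; rewrite !mxE map_f ?mem_enum. Qed.

Lemma row_cob_step_unmatched (M : 'M[R]_(ncell K k.+1)) (i : 'I_m) r :
  r \notin matched ->
  row r (step M i) = row r M -
    (dotc (sigma i) (bnd (row r M)) / dotc (sigma i) (bnd (row (t i) M)))
      *: row (t i) M.
Proof.
by move=> r_unmatched; apply/rowP => c; rewrite !mxE (negbTE r_unmatched).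
Qed.

Lemma row_foldl_cob_step_matched (M : 'M[R]_(ncell K k.+1)) (l : seq 'I_m) j :
  row (t j) (foldl step M l) = row (t j) M.
Proof.
by elim: l M => [|i l IHl] M //=; rewrite IHl row_cob_step_matched.
Qed.

Lemma dotc_bnd_cob_step_pivot (M : 'M[R]_(ncell K k.+1)) (i : 'I_m) r :
  r \notin matched -> dotc (sigma i) (bnd (row (t i) M)) != 0 ->
  dotc (sigma i) (bnd (row r (step M i))) = 0.
Proof.
move=> r_unmatched ti_pivot.
by rewrite row_cob_step_unmatched // bndBZ dotcBZr divfK ?subrr.
Qed.

Lemma dotc_bnd_cob_step_orth (M : 'M[R]_(ncell K k.+1)) (i : 'I_m) r
    (sigma' : 'rV[R]_(ncell K k)) :
  r \notin matched -> dotc sigma' (bnd (row r M)) = 0 ->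
  dotc sigma' (bnd (row (t i) M)) = 0 ->
  dotc sigma' (bnd (row r (step M i))) = 0.
Proof.
move=> r_unmatched r_orth ti_orth.
by rewrite row_cob_step_unmatched // bndBZ dotcBZr r_orth ti_orth mulr0 subr0.
Qed.

Variable Bk1 : 'M[R]_(ncell K k.+1).
Hypothesis pivot_neq0 : forall i, dotc (sigma i) (bnd (row (t i) Bk1)) != 0.
Hypothesis later_pivots_orth : forall i j : 'I_m, (i < j)%N ->
  dotc (sigma i) (bnd (row (t j) Bk1)) = 0.

Lemma dotc_bnd_foldl_cob_step (l : seq 'I_m) :
  pairwise (fun a b : 'I_m => (a < b)%N) l ->
  forall i r, i \in l -> r \notin matched ->
  dotc (sigma i) (bnd (row r (foldl step Bk1 l))) = 0.
Proof.
elim/last_ind: l => [|l x IHl] //.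
rewrite pairwise_rcons => /andP [lt_l_x l_incr] i r.
rewrite foldl_rcons mem_rcons in_cons => /orP [/eqP -> | i_in_l] r_unmatched.
  by apply: dotc_bnd_cob_step_pivot; rewrite // row_foldl_cob_step_matched.
apply: dotc_bnd_cob_step_orth r_unmatched (IHl l_incr i r i_in_l r_unmatched) _.
by rewrite row_foldl_cob_step_matched later_pivots_orth // (allP lt_l_x).
Qed.

Lemma dotc_bnd_foldl_enum_cob_step (i : 'I_m) r : r \notin matched ->
  dotc (sigma i) (bnd (row r (foldl step Bk1 (enum 'I_m)))) = 0.
Proof.
apply: dotc_bnd_foldl_cob_step; last by rewrite mem_enum.
have := iota_ltn_sorted 0 m.
by rewrite -val_enum_ord (sorted_pairwise ltn_trans) pairwise_map.
Qed.

End ChangeOfBasis.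

Theorem theorem7 (R : realType) (K : cell_complex3 R)
  (B : forall k, 'M[R]_(ncell K k)) (k : nat) (m : nat)
  (s : 'I_m -> 'I_(ncell K k)) (t : 'I_m -> 'I_(ncell K k.+1)) :
  is_chain_basis B ->
  (k <= 2)%N ->
  is_matching B s t ->
  is_acyclic B s t ->
  (* sigma_i is not incident to any of tau_{i+1}, ..., tau_m *)
  (forall i j : 'I_m, (i < j)%N -> ~~ incident (row (s i) (B k)) (row (t j) (B k.+1))) ->
  let D := Dmat (B k) (change_basis_succ B s t) in
  (* the block C_{k+1} x D_k vanishes *)
  (forall (r : 'I_(ncell K k.+1)) (i : 'I_m),
      r \notin [seq t j | j : 'I_m] -> D r (s i) = 0) /\
  (* D_k[U_{k+1} x D_k] is upper triangular and invertible *)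
  (forall i j : 'I_m, (j < i)%N -> (\matrix_(a, b) D (t a) (s b)) i j = 0) /\
  (\matrix_(a, b) D (t a) (s b)) \in unitmx.
Proof.
(* Acyclicity only serves to produce the ordering, which is assumed here. *)
move=> _ _ [_ [_ matched_incident]] _ later_not_incident D.
have later_pivots_orth (i j : 'I_m) : (i < j)%N ->
    dotc (row (s i) (B k)) (bnd (row (t j) (B k.+1))) = 0.
  by move=> /later_not_incident; rewrite negbK => /eqP.
have D_matched (a b : 'I_m) :
    D (t a) (s b) = dotc (row (s b) (B k)) (bnd (row (t a) (B k.+1))).
  by rewrite mxE row_foldl_cob_step_matched.
have D_trig (i j : 'I_m) : (j < i)%N -> (\matrix_(a, b) D (t a) (s b)) i j = 0.
  by move=> lt_ji; rewrite mxE D_matched later_pivots_orth.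
split; last split => //.
  move=> r i r_unmatched; rewrite mxE.
  exact: dotc_bnd_foldl_enum_cob_step
    matched_incident later_pivots_orth _ _ r_unmatched.
apply: unitmx_upper_trig D_trig _ => i.
by rewrite mxE D_matched; apply: matched_incident.
Qed.
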